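(* Let $\Sigma_0$ be an $n\times n$ symmetric positive definite matrix and apply the MRA-lp procedure (described in the context) to $\Sigma_0$. Suppose that for every $m\in\{1,\dots,M\}$ and every multi-index $(j_1,\dots,j_m)$, the matrix $\Phi_{j_1,\dots,j_m}$ satisfies $$\mathrm{R}\big(\Phi_{j_1,\dots,j_m}^{\top}\big)\cap \mathrm{R}\big(V^m_{j_1,\dots,j_m}\big)^{\perp}=\{\mathbf 0\},$$ where $\mathrm{R}(\cdot)$ denotes column space and $\perp$ the orthogonal complement (the condition being imposed at each step $m$ once $V^m_{j_1,\dots,j_m}$ has been formed). Then the procedure is well defined, $V^m_{j_1,\dots,j_m}$ is positive semidefinite for all $m=1,\dots,M$ and all multi-indices, and $\widehat V^m_{j_1,\dots,j_m}$ is positive definite for all $m=0,\dots,M$ and all multi-indices (so that $(\widehat V^m_{j_1,\dots,j_m})^{-1}$ and $(\widehat V^m_{j_1,\dots,j_m})^{-1/2}$ exist).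
   Context: Let $n\ge 1$ and $I_0=\{1,\dots,n\}$ index grid points. Fix $M\ge 0$ and integers $J_1,\dots,J_M\ge 2$. For $m\in\{0,\dots,M\}$ a multi-index is $(j_1,\dots,j_m)$ with $1\le j_i\le J_i$; for $m=0$ it is the empty multi-index, written $0$. Index sets $I_{j_1,\dots,j_m}\subseteq I_0$ are given with $I_0$ at $m=0$ and, for $m<M$, $I_{j_1,\dots,j_m}$ equal to the disjoint union of $I_{j_1,\dots,j_m,j_{m+1}}$ over $j_{m+1}=1,\dots,J_{m+1}$. Indices are ordered so that if $(j_1,\dots,j_M)$ is lexicographically greater than $(i_1,\dots,i_M)$ then $\min I_{j_1,\dots,j_M}>\max I_{i_1,\dots,i_M}$. Knot sets $K_{j_1,\dots,j_m}\subseteq I_{j_1,\dots,j_m}$ have $r_{j_1,\dots,j_m}$ elements. For each multi-index, $\Phi_{j_1,\dots,j_m}$ is a real $r'_{j_1,\dots,j_m}\times r_{j_1,\dots,j_m}$ matrix of rank $r'_{j_1,\dots,j_m}$ ($1\le r'_{j_1,\dots,j_m}\le r_{j_1,\dots,j_m}$) whose rows have Euclidean norm 1. For a matrix $C$ and index sets $A,A'$, $C[A,A']$ is the submatrix with rows in $A$ and columns in $A'$ (in increasing order). For a positive definite $S$, $S^{-1/2}$ is the inverse of its symmetric positive definite square root. MRA-lp procedure applied to an $n\times n$ symmetric positive definite $\Sigma_0$: (i) $W^0_0=\Sigma_0[I_0,K_0]$, $V^0_0=\Sigma_0[K_0,K_0]$, $\widehat V^0_0=\Phi_0V^0_0\Phi_0^\top$,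 $B_0=W^0_0\Phi_0^\top(\widehat V^0_0)^{-1/2}$. (ii) For $0\le k<m\le M$, $W^k_{j_1,\dots,j_m}$ is obtained from $W^k_{j_1,\dots,j_k}$ (whose rows are indexed by $I_{j_1,\dots,j_k}$) by keeping the rows in $I_{j_1,\dots,j_m}$, and $V^k_{j_1,\dots,j_m}$ by keeping the rows in $K_{j_1,\dots,j_m}$. (iii) For $m=1,\dots,M$ recursively: $W^m_{j_1,\dots,j_m}=\Sigma_0[I_{j_1,\dots,j_m},K_{j_1,\dots,j_m}]-\sum_{k=0}^{m-1}W^k_{j_1,\dots,j_m}\Phi_{j_1,\dots,j_k}^\top(\widehat V^k_{j_1,\dots,j_k})^{-1}\Phi_{j_1,\dots,j_k}(V^k_{j_1,\dots,j_m})^\top$; $V^m_{j_1,\dots,j_m}$ = rows of $W^m_{j_1,\dots,j_m}$ indexed by $K_{j_1,\dots,j_m}$; $\widehat V^m_{j_1,\dots,j_m}=\Phi_{j_1,\dots,j_m}V^m_{j_1,\dots,j_m}\Phi_{j_1,\dots,j_m}^\top$; $B_{j_1,\dots,j_m}=W^m_{j_1,\dots,j_m}\Phi_{j_1,\dots,j_m}^\top(\widehat V^m_{j_1,\dots,j_m})^{-1/2}$. (iv) Output $B=(B^M\;B^{M-1}\;\cdots\;B^0)$, where $B^m$ is the $n$-row block diagonal matrix with diagonal blocks $B_{j_1,\dots,j_m}$ arranged in lexicographic order of $(j_1,\dots,j_m)$ (block $B_{j_1,\dots,j_m}$ occupying rows $I_{j_1,\dots,j_m}$). *)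

From HB Require Import structures.
From mathcomp Require Import all_boot all_order all_algebra.
Set Implicit Arguments. Unset Strict Implicit. Unset Printing Implicit Defensive.
Import Order.TTheory GRing.Theory Num.Theory.
Local Open Scope ring_scope.

(* Multi-indices (j_1,...,j_m) are sequences of naturals; the empty
   sequence [::] is the root multi-index 0.  Grid points are 'I_n
   (grid point i+1 of the paper is the ordinal i). *)

Definition valid_mi (M : nat) (J : nat -> nat) (a : seq nat) : bool :=
  (size a <= M)%N &&
  all (fun p => (1 <= nth 0%N a p <= J p.+1)%N) (iota 0 (size a)).

Fixpoint lexlt (a b : seq nat) : bool :=
  match a, b with
  | x :: a', y :: b' => (x < y)%N || ((x == y) && lexlt a' b')
  | _, _ => false
  end.

Definition psdmx (R : realFieldType) (m : nat) (A : 'M[R]_m) : Prop :=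
  A^T = A /\ forall x : 'cV[R]_m, 0 <= (x^T *m A *m x) ord0 ord0.
Definition pdmx (R : realFieldType) (m : nat) (A : 'M[R]_m) : Prop :=
  A^T = A /\ forall x : 'cV[R]_m, x != 0 -> 0 < (x^T *m A *m x) ord0 ord0.

Section MRA.
Variables (R : realFieldType) (n : nat) (Sigma0 : 'M[R]_n).
Variables (K : seq nat -> {set 'I_n}) (r' : seq nat -> nat).
Variable Phi : forall a : seq nat, 'M[R]_(r' a, #|K a|).

Definition kv (a : seq nat) (c : 'I_#|K a|) : 'I_n := enum_val c.

(* A "W-type" matrix is represented as a function of (row grid point,
   column grid point); W^k_{j_1..j_m} has rows I_{j_1..j_m} and columns
   K_{j_1..j_k}. *)
Definition Wfun := 'I_n -> 'I_n -> R.

Definition Vsub (a : seq nat) (W : Wfun) : 'M[R]_(#|K a|) :=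
  \matrix_(c, d) W (kv c) (kv d).

Definition Vhat_of (a : seq nat) (W : Wfun) : 'M[R]_(r' a) :=
  Phi a *m Vsub a W *m (Phi a)^T.

Definition rowW (b : seq nat) (W : Wfun) (i : 'I_n) : 'rV[R]_(#|K b|) :=
  \row_c W i (kv c).

Definition Tterm (b : seq nat) (W : Wfun) : Wfun := fun i x =>
  (rowW b W i *m (Phi b)^T *m invmx (Vhat_of b W) *m Phi b
     *m (rowW b W x)^T) ord0 ord0.

Definition W0 : Wfun := fun _ _ => 0.

(* Wlevels m a = [:: W^0_{0}; W^1_{a|1}; ...; W^m_{a|m}] where a|k is the
   prefix of length k of a (all as functions of grid points). *)
Fixpoint Wlevels (m : nat) (a : seq nat) : seq Wfun :=
  match m with
  | 0 => [:: fun i x => Sigma0 i x]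
  | m'.+1 =>
      let L := Wlevels m' a in
      rcons L (fun i x => Sigma0 i x
                 - \sum_(k < m'.+1) Tterm (take k a) (nth W0 L k) i x)
  end.

(* W^m_{j_1..j_m} for a = (j_1..j_m) (only entries with rows in I_a and
   columns in K_a are meaningful) *)
Definition Wmat (a : seq nat) : Wfun := nth W0 (Wlevels (size a) a) (size a).

Definition Vmat (a : seq nat) : 'M[R]_(#|K a|) := Vsub a (Wmat a).

Definition Vhat (a : seq nat) : 'M[R]_(r' a) := Vhat_of a (Wmat a).

End MRA.

From HB Require Import structures.
From mathcomp Require Import all_boot all_order all_algebra.
From Stdlib Require Import FunctionalExtensionality.
From mathcomp Require Import lra.
Set Implicit Arguments. Unset Strict Implicit. Unset Printing Implicit Defensive.
Import Order.TTheory GRing.Theory Num.Theory.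
Local Open Scope ring_scope.

(* Viewing every W^k as an n x n matrix and writing B_b := S_b Phi_b^T, where
   S_b selects the knots K_b, one level of MRA-lp is the Schur-complement step
     W^(k+1) = W^k - W^k B (B^T W^k B)^-1 B^T W^k = (1 - C)^T W^k (1 - C),
   with C := B (B^T W^k B)^-1 B^T W^k; hence W^(k+1) stays positive
   semidefinite as long as the pivot B^T W^k B = \hat V^k is invertible.
   Conversely \hat V^k = Phi V^k Phi^T is positive definite when V^k is
   positive semidefinite, Phi has full row rank and no nonzero vector of
   R(Phi^T) is orthogonal to R(V^k); at level 0 definiteness comes from
   Sigma0 itself. Induction on the level proves both claims together. *)

Section QuadraticForms.
Variable R : realFieldType.

Lemma psdmx_congr m p (W : 'M[R]_m) (B : 'M[R]_(m, p)) :
  psdmx W -> psdmx (B^T *m W *m B).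
Proof.
case=> Ws Wp; split; first by rewrite !trmx_mul trmxK Ws mulmxA.
by move=> x; have := Wp (B *m x); rewrite trmx_mul !mulmxA.
Qed.

Lemma pdmx_congr m p (W : 'M[R]_m) (B : 'M[R]_(m, p)) :
  pdmx W -> row_free B^T -> pdmx (B^T *m W *m B).
Proof.
case=> Ws Wp Bf; split; first by rewrite !trmx_mul trmxK Ws mulmxA.
move=> x nz_x; have Bx_nz : B *m x != 0.
  apply: contra nz_x => /eqP Bx0.
  by rewrite -trmx_eq0 -(mulmx_free_eq0 _ Bf) -trmx_mul Bx0 linear0.
by have := Wp _ Bx_nz; rewrite trmx_mul !mulmxA.
Qed.

Lemma pdmx_psdmx m (W : 'M[R]_m) : pdmx W -> psdmx W.
Proof.
case=> Ws Wp; split=> // x.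
have [->|nz_x] := eqVneq x 0; first by rewrite mulmx0 mxE.
exact/ltW/Wp.
Qed.

Lemma pdmx_unitmx m (W : 'M[R]_m) : pdmx W -> W \in unitmx.
Proof.
case=> _ Wp; rewrite -row_free_unit; apply: inj_row_free => v vW0.
apply/eqP; apply: contraT => nz_v.
have : v^T != 0 by rewrite trmx_eq0.
by move/Wp; rewrite trmxK vW0 mul0mx mxE ltxx.
Qed.

Lemma cV_dot_self_eq0 m (y : 'cV[R]_m) : (y^T *m y) ord0 ord0 = 0 -> y = 0.
Proof.
rewrite mxE => /eqP; rewrite psumr_eq0 => [/allP y2_0|i _].
  apply/matrixP => i j; rewrite (ord1 j) mxE.
  have := y2_0 i (mem_index_enum _); rewrite !mxE -expr2 => /implyP/(_ isT).
  by rewrite sqrf_eq0 => /eqP.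
by rewrite !mxE -expr2 sqr_ge0.
Qed.

Lemma psdmx_form_eq0 m (V : 'M[R]_m) (v : 'cV[R]_m) :
  psdmx V -> (v^T *m V *m v) ord0 ord0 = 0 -> V *m v = 0.
Proof.
move=> [Vs Vp] form0; set y := V *m v; apply: cV_dot_self_eq0.
have yT : y^T = v^T *m V by rewrite /y trmx_mul Vs.
have along_y t : 0 <= t * (2 * (y^T *m y) ord0 ord0)
                        + t ^+ 2 * (y^T *m V *m y) ord0 ord0.
  have := Vp (v + t *: y).
  rewrite [(_ + _)^T]linearD /= [(t *: _)^T]linearZ /=.
  rewrite !mulmxDl !mulmxDr -!scalemxAl -!scalemxAr.
  have -> : v^T *m V *m y = y^T *m y by rewrite yT.
  have -> : y^T *m V *m v = y^T *m y by rewrite -mulmxA.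
  move: (v^T *m V *m v) (y^T *m y) (y^T *m V *m y) form0 => A B C A0.
  by rewrite !mxE A0 => h; rewrite expr2; nra.
have c_ge0 := Vp y.
move: (y^T *m y) (y^T *m V *m y) along_y c_ge0 => Y Z.
move: (Y ord0 ord0) (Z ord0 ord0) => b c along_y c_ge0.
(* Evaluating at t = -b/(c+1) gives 0 <= -(b/(c+1))^2 (c+2). *)
have hb : b = b / (c + 1) * (c + 1) by rewrite mulfVK // gt_eqF //; lra.
have := along_y (- (b / (c + 1))).
move: (b / (c + 1)) hb => s -> h.
have s2_le0 : s ^+ 2 * (c + 2) <= 0 by rewrite expr2 in h *; nra.
have : s ^+ 2 <= 0 by rewrite -(pmulr_lle0 _ (_ : 0 < c + 2)) //; lra.
by rewrite le_eqVlt ltNge sqr_ge0 orbF sqrf_eq0 => /eqP ->; rewrite mul0r.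
Qed.

Lemma pdmx_congr_range m r (V : 'M[R]_m) (P : 'M[R]_(r, m)) :
  psdmx V -> row_free P ->
  (forall u : 'cV[R]_r, (forall w : 'cV[R]_m, (P^T *m u)^T *m (V *m w) = 0) ->
     P^T *m u = 0) ->
  pdmx (P *m V *m P^T).
Proof.
move=> Vpsd Pf range_cond; have [Vs Vp] := Vpsd.
split; first by rewrite !trmx_mul trmxK Vs mulmxA.
move=> u nz_u.
have -> : u^T *m (P *m V *m P^T) *m u = (P^T *m u)^T *m V *m (P^T *m u).
  by rewrite trmx_mul trmxK !mulmxA.
rewrite lt_def Vp andbT; apply/eqP => /(psdmx_form_eq0 Vpsd) VPu0.
have /eqP : P^T *m u = 0.
  by apply: range_cond => w; rewrite mulmxA -Vs -trmx_mul VPu0 linear0 mul0mx.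
rewrite -trmx_eq0 trmx_mul trmxK mulmx_free_eq0 // trmx_eq0.
by apply/negP.
Qed.

Definition schur_compl m p (W : 'M[R]_m) (B : 'M[R]_(m, p)) : 'M[R]_m :=
  W - W *m B *m invmx (B^T *m W *m B) *m B^T *m W^T.

Lemma psdmx_schur_compl m p (W : 'M[R]_m) (B : 'M[R]_(m, p)) :
  psdmx W -> B^T *m W *m B \in unitmx -> psdmx (schur_compl W B).
Proof.
move=> Wpsd pivot_unit; have [Ws _] := Wpsd; set H := B^T *m W *m B.
have Hs : H^T = H by rewrite /H !trmx_mul trmxK Ws mulmxA.
set C := B *m invmx H *m B^T *m W.
have CTW : C^T *m W = W *m C.
  by rewrite /C !trmx_mul trmxK trmx_inv Hs Ws !mulmxA.
have WCC : W *m C *m C = W *m C.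
  have -> : W *m C *m C = W *m B *m invmx H *m H *m invmx H *m B^T *m W.
    by rewrite /C /H !mulmxA.
  by rewrite -(mulmxA _ _ H) mulVmx // mulmx1 /C !mulmxA.
have -> : schur_compl W B = (1%:M - C)^T *m W *m (1%:M - C).
  rewrite /schur_compl Ws [(_ - _)^T]linearB /= trmx1.
  rewrite mulmxBl mul1mx CTW mulmxDr mulmxN mulmx1 mulmxBl WCC subrr subr0.
  by rewrite /C !mulmxA.
exact: psdmx_congr.
Qed.

End QuadraticForms.

Section MRAlp.
Variables (R : realFieldType) (n : nat) (Sigma0 : 'M[R]_n).
Variables (K : seq nat -> {set 'I_n}) (r' : seq nat -> nat).
Variable Phi : forall a : seq nat, 'M[R]_(r' a, #|K a|).

Definition mx_of_Wfun (W : Wfun R n) : 'M[R]_n := \matrix_(i, x) W i x.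

Definition knot_sel (a : seq nat) : 'M[R]_(n, #|K a|) :=
  \matrix_(i, c) (i == kv c)%:R.

Definition knot_basis (a : seq nat) : 'M[R]_(n, r' a) :=
  knot_sel a *m (Phi a)^T.

Lemma mulmx_knot_sel p a (A : 'M[R]_(p, n)) i c :
  (A *m knot_sel a) i c = A i (kv c).
Proof.
rewrite mxE (bigD1 (kv c)) //= mxE eqxx mulr1 big1 ?addr0 // => j /negbTE jc.
by rewrite mxE jc mulr0.
Qed.

Lemma knot_sel_orthonormal a : (knot_sel a)^T *m knot_sel a = 1%:M.
Proof.
apply/matrixP => c d; rewrite mulmx_knot_sel !mxE.
by rewrite /kv (inj_eq enum_val_inj) eq_sym.
Qed.

Lemma row_free_knot_basis a :
  \rank (Phi a) = r' a -> row_free (knot_basis a)^T.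
Proof.
move=> rkPhi; have sel_free : row_free (knot_sel a)^T.
  by apply/row_freeP; exists (knot_sel a); rewrite knot_sel_orthonormal.
by rewrite /row_free trmx_mul trmxK mxrankMfree // rkPhi.
Qed.

Lemma Vsub_knot_sel a W :
  Vsub K a W = (knot_sel a)^T *m mx_of_Wfun W *m knot_sel a.
Proof.
apply/matrixP => c d; rewrite mulmx_knot_sel !mxE (bigD1 (kv c)) //=.
rewrite !mxE eqxx mul1r big1 ?addr0 // => j /negbTE jc.
by rewrite !mxE jc mul0r.
Qed.

Lemma Vhat_of_knot_basis a W :
  Vhat_of Phi a W = (knot_basis a)^T *m mx_of_Wfun W *m knot_basis a.
Proof. by rewrite /Vhat_of Vsub_knot_sel /knot_basis trmx_mul trmxK !mulmxA. Qed.

Lemma Tterm_knot_basis b W i x : Tterm Phi b W i x =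
  (mx_of_Wfun W *m knot_basis b *m invmx (Vhat_of Phi b W)
     *m (knot_basis b)^T *m (mx_of_Wfun W)^T) i x.
Proof.
have rowWE y : rowW K b W y = row y (mx_of_Wfun W *m knot_sel b).
  by apply/matrixP => u c; rewrite [RHS]mxE mulmx_knot_sel !mxE.
have row_trmx q (A C : 'M[R]_(n, q)) :
    row i (A *m (row x C)^T) ord0 ord0 = (A *m C^T) i x.
  by rewrite !mxE; apply: eq_bigr => k _; rewrite ?mxE.
rewrite /Tterm !rowWE -!row_mul row_trmx.
by rewrite /knot_basis !trmx_mul trmxK !mulmxA.
Qed.

Notation WL := (Wlevels Sigma0 Phi).
Notation Wnull := (W0 R (n:=n)).

Definition Wlevel (a : seq nat) (k : nat) : 'M[R]_n :=
  mx_of_Wfun (nth Wnull (WL k a) k).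

Lemma size_Wlevels k a : size (WL k a) = k.+1.
Proof. by elim: k => //= k IH; rewrite size_rcons IH. Qed.

Lemma nth_Wlevels_last k a : nth Wnull (WL k.+1 a) k.+1 =
  fun i x => Sigma0 i x
    - \sum_(j < k.+1) Tterm Phi (take j a) (nth Wnull (WL k a) j) i x.
Proof. by rewrite /= nth_rcons size_Wlevels ltnn eqxx. Qed.

Lemma nth_Wlevels_succ k a : nth Wnull (WL k.+1 a) k.+1 =
  fun i x => nth Wnull (WL k a) k i x
    - Tterm Phi (take k a) (nth Wnull (WL k a) k) i x.
Proof.
apply: functional_extensionality => i; apply: functional_extensionality => x.
case: k => [|k]; first by rewrite /= big_ord1.
rewrite nth_Wlevels_last nth_Wlevels_last big_ord_recr /= opprD addrA.
rewrite nth_rcons size_Wlevels ltnn eqxx.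
congr (_ - _ - _); apply: eq_bigr => j _.
by rewrite nth_rcons size_Wlevels ltn_ord.
Qed.

Lemma Wlevel0 a : Wlevel a 0 = Sigma0.
Proof. by apply/matrixP => i j; rewrite mxE. Qed.

Lemma WlevelS a k :
  Wlevel a k.+1 = schur_compl (Wlevel a k) (knot_basis (take k a)).
Proof.
apply/matrixP => i x; rewrite /Wlevel nth_Wlevels_succ mxE.
by rewrite Tterm_knot_basis Vhat_of_knot_basis !mxE.
Qed.

Lemma Wlevels_take k a b : take k a = take k b -> WL k a = WL k b.
Proof.
have take_eq j k' : (j <= k')%N -> take k' a = take k' b -> take j a = take j b.
  by move=> jk e; rewrite -(take_takel a jk) e take_takel.
elim: k => [//|k IH] e /=.
rewrite IH ?(take_eq k k.+1) //; congr rcons.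
apply: functional_extensionality => i; apply: functional_extensionality => x.
congr (_ - _); apply: eq_bigr => j _.
by rewrite (take_eq j k.+1) // ltnW.
Qed.

Lemma Wmat_prefix a k : (k <= size a)%N ->
  Wmat Sigma0 Phi (take k a) = nth Wnull (WL k a) k.
Proof.
by move=> ka; rewrite /Wmat size_takel // (Wlevels_take (b := a)) ?take_takel.
Qed.

Lemma Vmat_prefix a k : (k <= size a)%N ->
  Vmat Sigma0 Phi (take k a) =
  (knot_sel (take k a))^T *m Wlevel a k *m knot_sel (take k a).
Proof. by move=> ka; rewrite /Vmat Wmat_prefix // Vsub_knot_sel. Qed.

Lemma Vhat_prefix a k : (k <= size a)%N ->
  Vhat Sigma0 Phi (take k a) =
  (knot_basis (take k a))^T *m Wlevel a k *m knot_basis (take k a).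
Proof. by move=> ka; rewrite /Vhat Wmat_prefix // Vhat_of_knot_basis. Qed.

Lemma Vhat_Vmat a : Vhat Sigma0 Phi a = Phi a *m Vmat Sigma0 Phi a *m (Phi a)^T.
Proof. by []. Qed.

Lemma valid_mi_take M J a k : valid_mi M J a -> valid_mi M J (take k a).
Proof.
case/andP => sz /allP valid_a; apply/andP; split.
  by rewrite size_take_min; apply: leq_trans sz; apply: geq_minr.
apply/allP => p; rewrite mem_iota add0n size_take_min leq_min.
case/andP=> _ /andP [pk pa]; rewrite nth_take //.
by apply: valid_a; rewrite mem_iota add0n.
Qed.

Variables (M : nat) (J : nat -> nat).
Hypothesis rank_Phi : forall a, valid_mi M J a -> \rank (Phi a) = r' a.
Hypothesis Sigma0_pd : pdmx Sigma0.
Hypothesis range_cond : forall a, valid_mi M J a -> (1 <= size a)%N ->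
  forall u : 'cV[R]_(r' a),
    (forall w : 'cV[R]_(#|K a|),
       ((Phi a)^T *m u)^T *m (Vmat Sigma0 Phi a *m w) = 0) ->
    (Phi a)^T *m u = 0.

Lemma Vhat_prefix_pd a k : valid_mi M J a -> (k <= size a)%N ->
  psdmx (Wlevel a k) -> pdmx (Vhat Sigma0 Phi (take k a)).
Proof.
move=> va ka Wpsd; have vta := valid_mi_take k va.
case: k ka Wpsd vta => [|k] ka Wpsd vta.
  rewrite Vhat_prefix // Wlevel0; apply: pdmx_congr => //.
  exact: row_free_knot_basis (rank_Phi vta).
rewrite Vhat_Vmat; apply: pdmx_congr_range.
- by rewrite Vmat_prefix //; apply: psdmx_congr.
- by rewrite /row_free rank_Phi.
- by apply: range_cond; rewrite ?size_takel.
Qed.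

Lemma Wlevel_psd a k : valid_mi M J a -> (k <= size a)%N ->
  psdmx (Wlevel a k).
Proof.
move=> va; elim: k => [_|k IH ka]; first by rewrite Wlevel0; apply: pdmx_psdmx.
have Wpsd := IH (ltnW ka).
rewrite WlevelS; apply: psdmx_schur_compl => //.
have kle : (k <= size a)%N by apply: ltnW.
by rewrite -Vhat_prefix //; apply/pdmx_unitmx/(Vhat_prefix_pd va).
Qed.

End MRAlp.

Theorem proposition1
  (R : realFieldType) (n M : nat) (J : nat -> nat)
  (I : seq nat -> {set 'I_n}) (K : seq nat -> {set 'I_n})
  (r' : seq nat -> nat) (Phi : forall a : seq nat, 'M[R]_(r' a, #|K a|))
  (Sigma0 : 'M[R]_n) :
  (1 <= n)%N ->
  (forall k, (1 <= k <= M)%N -> (2 <= J k)%N) ->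
  I [::] = [set: 'I_n] ->
  (forall a, valid_mi M J a -> (size a < M)%N ->
     I a = \bigcup_(1 <= k < (J (size a).+1).+1) I (rcons a k)) ->
  (forall a, valid_mi M J a -> (size a < M)%N ->
     forall k1 k2, (1 <= k1 <= J (size a).+1)%N ->
       (1 <= k2 <= J (size a).+1)%N -> k1 != k2 ->
     [disjoint I (rcons a k1) & I (rcons a k2)]) ->
  (forall a b, valid_mi M J a -> valid_mi M J b -> size a = M -> size b = M ->
     lexlt b a -> forall x y, x \in I a -> y \in I b -> (val y < val x)%N) ->
  (forall a, valid_mi M J a -> K a \subset I a) ->
  (forall a, valid_mi M J a -> (1 <= r' a <= #|K a|)%N) ->
  (forall a, valid_mi M J a -> \rank (Phi a) = r' a) ->
  (forall a, valid_mi M J a ->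
     forall p, \sum_(c < #|K a|) Phi a p c ^+ 2 = 1) ->
  pdmx Sigma0 ->
  (* R(Phi_a^T) meets R(V^m_a)^perp only in 0, for 1 <= m <= M *)
  (forall a, valid_mi M J a -> (1 <= size a)%N ->
     forall u : 'cV[R]_(r' a),
       (forall w : 'cV[R]_(#|K a|),
          ((Phi a)^T *m u)^T *m (Vmat Sigma0 Phi a *m w) = 0) ->
       (Phi a)^T *m u = 0) ->
  (forall a, valid_mi M J a -> (1 <= size a)%N -> psdmx (Vmat Sigma0 Phi a)) /\
  (forall a, valid_mi M J a -> pdmx (Vhat Sigma0 Phi a)).
Proof.
(* The W^k are computed on the whole grid. *)
move=> _ _ _ _ _ _ _ _ rank_Phi _ Sigma0_pd range_cond.
have Wpsd a (va : valid_mi M J a) :=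
  Wlevel_psd rank_Phi Sigma0_pd range_cond va (leqnn (size a)).
split=> a va.
  by move=> _; rewrite -[a]take_size Vmat_prefix //; apply/psdmx_congr/Wpsd.
have := Vhat_prefix_pd rank_Phi Sigma0_pd range_cond va (leqnn _) (Wpsd a va).
by rewrite take_size.
Qed.
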